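(* Let $X=(X_t)_{t\in\mathbb N}$ be a time-homogeneous Markov chain on a finite state space $\mathcal S$ with column-stochastic transition matrix $M$, $M_{zx}=\mathbb P(X_{t+1}=z\mid X_t=x)$. Let $\{\mathcal S_1,\dots,\mathcal S_k\}$ be a partition of $\mathcal S$ and $\pi:\mathcal S\to\{\mathcal S_1,\dots,\mathcal S_k\}$ the map with $\pi(x)=\mathcal S_i$ iff $x\in\mathcal S_i$. Suppose that for every $i$, $$M_{zx}=M_{zx'}\quad\text{for all }x,x'\in\mathcal S_i\text{ and all }z\in\mathcal S\setminus\mathcal S_i.$$ Then $X$ is lumpable with respect to the partition, i.e. $\pi\circ X=(\pi(X_t))_t$ is a Markov chain for every initial distribution of $X_0$. *)

(* Finite Markov chains described by their finite-dimensional
   path laws (no measure theory needed: state spaces are finite). *)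
From HB Require Import structures.
From mathcomp Require Import all_boot all_order all_algebra.
Set Implicit Arguments. Unset Strict Implicit. Unset Printing Implicit Defensive.
Import Order.TTheory GRing.Theory Num.Theory.
Local Open Scope ring_scope.

(* column-stochastic matrix: M z x = P(X_{t+1} = z | X_t = x) *)
Definition col_stochastic (R : numDomainType) (T : finType) (M : T -> T -> R) :=
  (forall z x, 0 <= M z x) /\ (forall x, \sum_(z : T) M z x = 1).

Definition distribution (R : numDomainType) (T : finType) (mu : T -> R) :=
  (forall x, 0 <= mu x) /\ \sum_(x : T) mu x = 1.

Fixpoint path_weight (R : numDomainType) (T : finType) (M : T -> T -> R)
  (x : T) (ys : seq T) : R :=
  match ys with
  | [::] => 1
  | y :: ys' => M y x * path_weight M y ys'
  end.

(* law of the chain with initial distribution mu and transition matrix M: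
   chain_law mu M x0 xs = P(X_0 = x0, X_1 = xs_0, ..., X_n = xs_{n-1}) *)
Definition chain_law (R : numDomainType) (T : finType) (mu : T -> R)
  (M : T -> T -> R) (x0 : T) (xs : seq T) : R :=
  mu x0 * path_weight M x0 xs.

(* law of the projected process pi o X:
   P(pi X_0 = b0, pi X_1 = bs_0, ..., pi X_n = bs_{n-1}) *)
Definition lumped_law (R : numDomainType) (T B : finType) (mu : T -> R)
  (M : T -> T -> R) (pi : T -> B) (b0 : B) (bs : seq B) : R :=
  \sum_(x0 : T | pi x0 == b0)
    \sum_(t : (size bs).-tuple T | map pi (tval t) == bs) chain_law mu M x0 (tval t).

(* A process on a finite state space B, given by its finite-dimensional laws
   P b0 bs = P(Y_0 = b0, Y_1 = bs_0, ...), is a (time-homogeneous) Markov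
   chain: there is a column-stochastic transition matrix N with
   P(Y_0..Y_n, Y_{n+1} = b) = P(Y_0..Y_n) * N b Y_n. *)
Definition is_markov_chain (R : numDomainType) (B : finType)
  (P : B -> seq B -> R) :=
  exists N : B -> B -> R, col_stochastic N /\
    forall (b0 : B) (bs : seq B) (b : B),
      P b0 (rcons bs b) = P b0 bs * N b (last b0 bs).

From HB Require Import structures.
From mathcomp Require Import all_boot all_order all_algebra.
Import Order.TTheory GRing.Theory Num.Theory.
Set Implicit Arguments. Unset Strict Implicit. Unset Printing Implicit Defensive.
Local Open Scope ring_scope.

(* For a start state x0 and a block sequence bs, let
   [block_path_weight x0 bs] be the total weight of the paths from x0 whose
   projections under pi spell bs; the lumped law is then the mu-average of
   these weights over the start states of the block b0.  Summing over the
   first step of a path gives a first-step recursion for this weight.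
   The lumpability hypothesis, together with column-stochasticity (for the
   mass a state keeps inside its own block), shows that the mass
   [block_mass x b] sent from x into block b depends only on the block of x;
   it therefore defines a column-stochastic matrix N on the blocks.  By
   induction on bs the first-step recursion turns into the last-step identity
   block_path_weight x0 (rcons bs b) = block_path_weight x0 bs * N b (last ..),
   which after averaging over x0 is exactly the Markov property of pi o X. *)

Lemma tuple_sum_cons (R : numDomainType) (S : finType) (n : nat)
  (P : seq S -> bool) (F : seq S -> R) :
  \sum_(t : n.+1.-tuple S | P (tval t)) F (tval t) =
  \sum_(x : S) \sum_(t : n.-tuple S | P (x :: tval t)) F (x :: tval t).
Proof.
rewrite [RHS]pair_big_dep /=.
rewrite (reindex (fun p : S * n.-tuple S => [tuple of p.1 :: p.2])) /=.
  by apply: eq_bigl => -[x t].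
exists (fun t : n.+1.-tuple S => (thead t, [tuple of behead t])).
  by move=> [x t] _ /=; rewrite theadE; congr pair; apply: val_inj.
by move=> t _ /=; rewrite -tuple_eta.
Qed.

Section BlockPaths.
Variables (R : numDomainType) (S B : finType) (M : S -> S -> R) (pi : S -> B).

Definition block_path_weight (x0 : S) (bs : seq B) : R :=
  \sum_(t : (size bs).-tuple S | map pi (tval t) == bs) path_weight M x0 (tval t).

Definition block_mass (x : S) (b : B) : R := \sum_(z | pi z == b) M z x.

Lemma block_path_weight_nil (x0 : S) : block_path_weight x0 [::] = 1.
Proof.
rewrite /block_path_weight /= (big_pred1 [tuple]) //= => t.
by rewrite [t]tuple0 /= !eqxx.
Qed.

Lemma block_path_weight_cons (x0 : S) (b : B) (bs : seq B) :
  block_path_weight x0 (b :: bs) =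
  \sum_(y | pi y == b) M y x0 * block_path_weight y bs.
Proof.
rewrite /block_path_weight /= (@tuple_sum_cons R S (size bs)
  (fun s => map pi s == b :: bs) (fun s => path_weight M x0 s)) /=.
rewrite (bigID (fun y => pi y == b)) /= [X in _ + X]big1 ?addr0; last first.
  by move=> y /negbTE hy; apply: big1 => t; rewrite eqseq_cons hy.
apply: eq_bigr => y /eqP hy; rewrite big_distrr /=.
by apply: eq_bigl => t; rewrite eqseq_cons hy eqxx.
Qed.

Lemma lumped_lawE (mu : S -> R) (b0 : B) (bs : seq B) :
  lumped_law mu M pi b0 bs = \sum_(x0 | pi x0 == b0) mu x0 * block_path_weight x0 bs.
Proof. by apply: eq_bigr => x0 _; rewrite big_distrr. Qed.

End BlockPaths.

Section Lumpability.
Variables (R : realFieldType) (S B : finType) (M : S -> S -> R) (pi : S -> B).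
Hypothesis M_stochastic : col_stochastic M.
Hypothesis M_lumpable :
  forall x x' z : S, pi x = pi x' -> pi z != pi x -> M z x = M z x'.

Lemma block_mass_own (x : S) (b : B) :
  block_mass M pi x b = 1 - \sum_(z | pi z != b) M z x.
Proof.
by rewrite -(M_stochastic.2 x) (bigID (fun z => pi z == b) predT) /= addrK.
Qed.

Lemma block_mass_lumped (x x' : S) (b : B) :
  pi x = pi x' -> block_mass M pi x b = block_mass M pi x' b.
Proof.
move=> hxx'; have out z : pi z != pi x -> M z x = M z x' by apply: M_lumpable.
have [->|hb] := eqVneq b (pi x).
  by rewrite !block_mass_own; congr (_ - _); apply: eq_bigr => z; apply: out.
by apply: eq_bigr => z /eqP hz; apply: out; rewrite hz.
Qed.

(* The transition matrix of the lumped chain; empty blocks are absorbing. *)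
Definition lumped_matrix (b a : B) : R :=
  if [pick x | pi x == a] is Some x then block_mass M pi x b else (b == a)%:R.

Lemma lumped_matrixE (x : S) (b : B) :
  block_mass M pi x b = lumped_matrix b (pi x).
Proof.
rewrite /lumped_matrix; case: pickP => [x' /eqP hx'|]; last first.
  by move/(_ x); rewrite eqxx.
by apply: block_mass_lumped; rewrite hx'.
Qed.

Lemma lumped_matrix_stochastic : col_stochastic lumped_matrix.
Proof.
split=> [b a|a]; rewrite /lumped_matrix; case: pickP => [x _|_].
- by apply: sumr_ge0 => z _; apply: M_stochastic.1.
- by rewrite ler0n.
- by rewrite -(M_stochastic.2 x) (partition_big pi predT).
- by rewrite (bigD1 a) //= eqxx big1 ?addr0 // => b /negbTE ->.
Qed.

Lemma block_path_weight_rcons (x0 : S) (bs : seq B) (b : B) :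
  block_path_weight M pi x0 (rcons bs b) =
  block_path_weight M pi x0 bs * lumped_matrix b (last (pi x0) bs).
Proof.
elim: bs x0 => [|b1 bs IH] x0 /=.
  rewrite block_path_weight_cons block_path_weight_nil mul1r -lumped_matrixE.
  by apply: eq_bigr => y _; rewrite block_path_weight_nil mulr1.
rewrite !block_path_weight_cons big_distrl /=.
by apply: eq_bigr => y /eqP hy; rewrite IH mulrA hy.
Qed.

End Lumpability.

Theorem mainTheorem12 (R : realFieldType) (S : finType) (k : nat)
  (M : S -> S -> R) (pi : S -> 'I_k) :
  col_stochastic M ->
  (forall i : 'I_k, exists x : S, pi x = i) ->
  (forall x x' z : S, pi x = pi x' -> pi z != pi x -> M z x = M z x') ->
  forall mu : S -> R, distribution mu ->
    is_markov_chain (lumped_law mu M pi).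
Proof.
move=> M_stochastic _ M_lumpable mu _.
exists (lumped_matrix M pi); split; first exact: lumped_matrix_stochastic.
move=> b0 bs b; rewrite !lumped_lawE big_distrl /=.
apply: eq_bigr => x0 /eqP hx0.
by rewrite (block_path_weight_rcons M_stochastic M_lumpable) hx0 mulrA.
Qed.
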